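(* Let $c,k_1,k_2,k_3,k_4$ be real constants with $k_1\neq0$, and let $F$ be a smooth function of $x$ on an interval satisfying identically $$\Big(F(x)+\frac{k_3}{2}\Big)\Big(F(x)+\frac{c}{k_1}x+\frac{k_2}{k_1}-k_3\Big)^2=k_4.$$ Then for $V(x,y)=cy+F(x)$ the function $$J=k_1\dot x^3+\dot x^2\dot y+\big(3k_1F(x)+cx+k_2\big)\dot x+\big(2F(x)+k_3\big)\dot y$$ is a first integral of $\ddot x=-V_{,x}$, $\ddot y=-V_{,y}$.
   Context: A first integral is a function of $(t,x,y,\dot x,\dot y)$ whose total time derivative vanishes along every solution of the given equations of motion. *)

From Stdlib Require Import Reals.
From Coquelicot Require Import Coquelicot.
Open Scope R_scope.

Definition in_oint (a b : Rbar) (x : R) : Prop := Rbar_lt a x /\ Rbar_lt x b.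

Definition smooth_on (a b : Rbar) (F : R -> R) : Prop :=
  forall (n : nat) (x : R), in_oint a b x -> ex_derive_n F n x.

Definition V (c : R) (F : R -> R) (x y : R) : R := c * y + F x.

Definition V_x (c : R) (F : R -> R) (x y : R) : R := Derive (fun u => V c F u y) x.
Definition V_y (c : R) (F : R -> R) (x y : R) : R := Derive (fun v => V c F x v) y.

Definition J (c k1 k2 k3 : R) (F : R -> R) (x y xd yd : R) : R :=
  k1 * xd ^ 3 + xd ^ 2 * yd + (3 * k1 * F x + c * x + k2) * xd
  + (2 * F x + k3) * yd.

Definition is_solution (c : R) (F : R -> R) (a b t0 t1 : Rbar)
  (x y xd yd : R -> R) : Prop :=
  forall t, in_oint t0 t1 t ->
    in_oint a b (x t) /\
    is_derive x t (xd t) /\ is_derive y t (yd t) /\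
    is_derive xd t (- V_x c F (x t) (y t)) /\
    is_derive yd t (- V_y c F (x t) (y t)).

Definition first_integral (c : R) (F : R -> R) (a b : Rbar)
  (I : R -> R -> R -> R -> R -> R) : Prop :=
  forall (t0 t1 : Rbar) (x y xd yd : R -> R),
    is_solution c F a b t0 t1 x y xd yd ->
    forall t, in_oint t0 t1 t ->
      is_derive (fun s => I s (x s) (y s) (xd s) (yd s)) t 0.

From Stdlib Require Import Reals Lra Classical.
From Coquelicot Require Import Coquelicot.
Open Scope R_scope.

(* Along a solution x'' = -F'(x), y'' = -c of the potential V = c y + F(x),
   the time derivative of J is

     dJ/dt = - [ F'(x) (3 k1 F(x) + c x + k2) + c (2 F(x) + k3) ] = - Q(x),

   so J is a first integral iff the "obstruction" Q vanishes on the domain.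
   Writing P = F + k3/2 and G = F + (c/k1) x + k2/k1 - k3, the hypothesis says
   P G^2 = k4 is constant; differentiating gives G (F' G + 2 P G') = 0, and
   k1 (F' G + 2 P G') = Q, hence Q G = 0 on the interval.  If Q(x0) <> 0,
   continuity of Q (F is C^2) forces G = 0 near x0, so G'(x0) = 0, i.e.
   F'(x0) = -c/k1, and then Q(x0) = -c G(x0) = 0, a contradiction. *)

Lemma locally_in_oint (a b : Rbar) (x : R) :
  in_oint a b x -> locally x (in_oint a b).
Proof.
  intros [hax hxb].
  exact (filter_and _ _ (open_Rbar_gt' x a hax) (open_Rbar_lt' x b hxb)).
Qed.

Lemma locally_zero_factor (f g : R -> R) (x : R) :
  continuous f x -> f x <> 0 ->
  locally x (fun u => f u * g u = 0) -> locally x (fun u => g u = 0).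
Proof.
  intros hf hfx hfg.
  assert (hnz : locally x (fun u => f u <> 0)).
  { exact (hf (fun v => v <> 0) (open_neq 0 (f x) hfx)). }
  generalize (filter_and _ _ hnz hfg). apply filter_imp.
  intros u [hu hprod].
  destruct (Rmult_integral _ _ hprod); [contradiction | assumption].
Qed.

Section FirstIntegral.

Variables (c k1 k2 k3 : R) (F : R -> R).

Definition constraint_factor (u : R) : R := F u + c / k1 * u + k2 / k1 - k3.

(* The obstruction Q: minus the time derivative of J along solutions. *)
Definition obstruction (u : R) : R :=
  Derive F u * (3 * k1 * F u + c * u + k2) + c * (2 * F u + k3).

Lemma is_derive_constraint_factor (u : R) :
  ex_derive F u -> is_derive constraint_factor u (Derive F u + c / k1).
Proof.
  intros hF. unfold constraint_factor.
  auto_derive; [exact hF | change (fun x : R => F x) with F; ring].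
Qed.

Lemma V_x_eq (u v : R) : ex_derive F u -> V_x c F u v = Derive F u.
Proof.
  intros hF. unfold V_x, V. apply is_derive_unique.
  auto_derive; [exact hF | change (fun x : R => F x) with F; ring].
Qed.

Lemma V_y_eq (u v : R) : V_y c F u v = c.
Proof.
  unfold V_y, V. apply is_derive_unique. auto_derive; [exact I | ring].
Qed.

Lemma is_derive_J_along (x y xd yd : R -> R) (t : R) :
  ex_derive F (x t) ->
  is_derive x t (xd t) ->
  is_derive xd t (- V_x c F (x t) (y t)) ->
  is_derive yd t (- V_y c F (x t) (y t)) ->
  is_derive (fun s => J c k1 k2 k3 F (x s) (y s) (xd s) (yd s)) t
            (- obstruction (x t)).
Proof.
  intros hF hx hxd hyd.
  rewrite (V_x_eq _ _ hF) in hxd. rewrite V_y_eq in hyd.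
  unfold J. auto_derive.
  - repeat split; first [exact I | exact hF | eexists; eassumption].
  - change (fun s : R => x s) with x;
    change (fun s : R => xd s) with xd; change (fun s : R => yd s) with yd;
    change (fun s : R => F s) with F.
    rewrite (is_derive_unique _ _ _ hx),
            (is_derive_unique _ _ _ hxd), (is_derive_unique _ _ _ hyd).
    unfold obstruction. ring.
Qed.

Hypothesis k1_neq0 : k1 <> 0.

(* Differentiating (F + k3/2) G^2 = k4 gives Q G = 0 on the interval. *)
Lemma obstruction_mul_factor (a b : Rbar) (k4 : R) (u : R) :
  (forall x, in_oint a b x -> ex_derive F x) ->
  (forall x, in_oint a b x -> (F x + k3 / 2) * constraint_factor x ^ 2 = k4) ->
  in_oint a b u -> obstruction u * constraint_factor u = 0.
Proof.
  intros hF hconstr hu.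
  set (P := fun x => (F x + k3 / 2) * constraint_factor x ^ 2).
  assert (hP0 : is_derive P u 0).
  { apply is_derive_ext_loc with (f := fun _ => k4);
      [| exact (is_derive_const k4 u)].
    generalize (locally_in_oint a b u hu). apply filter_imp.
    intros v hv. symmetry. exact (hconstr v hv). }
  assert (hG := is_derive_constraint_factor u (hF u hu)).
  assert (hP : is_derive P u
     (Derive F u * constraint_factor u ^ 2
      + (F u + k3 / 2) * (2 * constraint_factor u * (Derive F u + c / k1)))).
  { unfold P. auto_derive.
    - repeat split; [exact (hF u hu) | eexists; exact hG].
    - change (fun x : R => F x) with F;
      change (fun x : R => constraint_factor x) with constraint_factor.
      rewrite (is_derive_unique _ _ _ hG). ring. }
  apply is_derive_unique in hP.
  rewrite (is_derive_unique _ _ _ hP0) in hP.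
  transitivity
    (k1 * (Derive F u * constraint_factor u ^ 2
           + (F u + k3 / 2) * (2 * constraint_factor u * (Derive F u + c / k1)))).
  - unfold obstruction, constraint_factor. field. exact k1_neq0.
  - rewrite <- hP. ring.
Qed.

Lemma obstruction_at_double_root (u : R) :
  constraint_factor u = 0 -> Derive F u + c / k1 = 0 -> obstruction u = 0.
Proof.
  intros hG hG'.
  transitivity (- c * constraint_factor u).
  - unfold obstruction, constraint_factor.
    replace (Derive F u) with (- (c / k1)) by lra.
    field. exact k1_neq0.
  - rewrite hG. ring.
Qed.

Lemma obstruction_vanishes (a b : Rbar) (k4 : R) (u : R) :
  (forall x, in_oint a b x -> ex_derive F x) ->
  (forall x, in_oint a b x -> ex_derive (Derive F) x) ->
  (forall x, in_oint a b x -> (F x + k3 / 2) * constraint_factor x ^ 2 = k4) ->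
  in_oint a b u -> obstruction u = 0.
Proof.
  intros hF hF' hconstr hu. apply NNPP. intros hQ.
  assert (hQcont : continuous obstruction u).
  { apply (@ex_derive_continuous R_AbsRing R_NormedModule).
    unfold obstruction. auto_derive.
    repeat split; first [exact (hF u hu) | exact (hF' u hu)]. }
  assert (hGnear : locally u (fun v => constraint_factor v = 0)).
  { apply (locally_zero_factor _ _ _ hQcont hQ).
    generalize (locally_in_oint a b u hu). apply filter_imp.
    intros v hv. exact (obstruction_mul_factor a b k4 v hF hconstr hv). }
  assert (hG' : is_derive constraint_factor u 0).
  { apply is_derive_ext_loc with (f := fun _ => 0);
      [| exact (is_derive_const 0 u)].
    generalize hGnear. apply filter_imp. intros v hv. symmetry. exact hv. }
  apply hQ, obstruction_at_double_root.
  - exact (locally_singleton _ _ hGnear).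
  - rewrite <- (is_derive_unique _ _ _ hG').
    symmetry. apply is_derive_unique, is_derive_constraint_factor, hF, hu.
Qed.

End FirstIntegral.

Theorem mainTheorem12 (c k1 k2 k3 k4 : R) (a b : Rbar) (F : R -> R) :
  k1 <> 0 ->
  Rbar_lt a b ->
  smooth_on a b F ->
  (forall x, in_oint a b x ->
     (F x + k3 / 2) * (F x + c / k1 * x + k2 / k1 - k3) ^ 2 = k4) ->
  first_integral c F a b (fun _ x y xd yd => J c k1 k2 k3 F x y xd yd).
Proof.
  intros hk1 _ hsmooth hconstr t0 t1 x y xd yd hsol t ht.
  assert (hF : forall u, in_oint a b u -> ex_derive F u)
    by (intros u hu; exact (hsmooth 1%nat u hu)).
  assert (hF' : forall u, in_oint a b u -> ex_derive (Derive F) u)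
    by (intros u hu; exact (hsmooth 2%nat u hu)).
  destruct (hsol t ht) as [hxt [hx [_ [hxd hyd]]]].
  pose proof (is_derive_J_along c k1 k2 k3 F x y xd yd t
                (hF _ hxt) hx hxd hyd) as hJ.
  rewrite (obstruction_vanishes c k1 k2 k3 F hk1 a b k4 (x t) hF hF' hconstr hxt)
    in hJ.
  rewrite Ropp_0 in hJ. exact hJ.
Qed.
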